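(* Let $n$ be a positive integer and let $\mathcal{D}$ be a set of positive divisors of $n/\mathrm{rad}(n)$ which is product-free as a set of integers (i.e. there are no $d_1,d_2,d_3\in\mathcal{D}$ with $d_1d_2=d_3$). Then the set $$ S_{\mathcal{D}} := \{ s\in \mathbb{Z}/n\mathbb{Z} : \gcd(s,n)\in \mathcal{D}\} $$ is a product-free subset of $\mathbb{Z}/n\mathbb{Z}$, and $$ |S_{\mathcal{D}}| = \varphi(n)\sum_{d\in\mathcal{D}}\frac1d . $$
   Context: $\mathrm{rad}(n)$ denotes the largest squarefree divisor of $n$ (the product of the distinct primes dividing $n$), and $\varphi$ is Euler's totient function. For $s\in\mathbb{Z}/n\mathbb{Z}$, $\gcd(s,n)$ means the gcd of $n$ with any integer representative of $s$ (well defined). A subset $S\subseteq \mathbb{Z}/n\mathbb{Z}$ is product-free if there are no $a,b,c\in S$ (not necessarily distinct) with $ab\equiv c\pmod n$. *)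

From HB Require Import structures.
From mathcomp Require Import all_boot all_order all_algebra.
Set Implicit Arguments. Unset Strict Implicit. Unset Printing Implicit Defensive.

Definition radical (n : nat) : nat := \prod_(p <- primes n) p.

(* Z/nZ is modelled as 'I_n (residues 0..n-1, n >= 1), with
   multiplication (a * b) mod n. *)
Definition product_free_mod (n : nat) (S : {set 'I_n}) : Prop :=
  forall a b c : 'I_n, a \in S -> b \in S -> c \in S -> (a * b) %% n <> c.

Definition product_free_nat (D : seq nat) : Prop :=
  forall d1 d2 d3, d1 \in D -> d2 \in D -> d3 \in D -> d1 * d2 <> d3.

Definition S_D (n : nat) (D : seq nat) : {set 'I_n} :=
  [set s : 'I_n | gcdn s n \in D].

From HB Require Import structures.
From mathcomp Require Import all_boot all_order all_algebra.
Import GRing.Theory Num.Theory.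

(* Throughout, a divisor g of n is called "small" when g %| n %/ radical n,
   i.e. g * rad(n) %| n: every prime of n divides n/g.

   If gcd(x, n) = g is small, then the cofactor x/g is
   coprime to n: a prime p dividing both would give p*g | gcd(x, n) = g.
   Consequently gcd(ab, n) = gcd(gcd(a,n) gcd(b,n), n) whenever both gcds
   are small, and if moreover this gcd is again small it equals
   gcd(a,n) gcd(b,n) itself (its cofactor is coprime to n yet divides n^2).
   So a*b = c in Z/nZ with a, b, c in S_D forces d_a d_b = d_c in D.

   For d | n, the residues s < n with gcd(s, n) = d are the
   s = t d with t < n/d coprime to n/d, hence there are totient(n/d) of them;
   summing over D gives |S_D| = sum_d totient(n/d).  Finally, when d is small
   every prime of d divides n/d, so totient(n) = totient(n/d) * d. *)

Lemma radical_dvdn n : radical n %| n.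
Proof.
have [->|n_gt0] := posnP n; first by rewrite dvdn0.
rewrite {2}(prod_prime_decomp n_gt0) /radical /primes /unzip1 big_map.
rewrite big_seq [X in _ %| X]big_seq.
apply: (big_ind2 (fun x y => x %| y)) => //.
  by move=> ? ? ? ? ? ?; apply: dvdn_mul.
case=> p e /mem_prime_decomp [_ e_gt0 _] /=.
by rewrite -{1}(expn1 p) dvdn_exp2l.
Qed.

Lemma prime_dvd_radical n p : 0 < n -> prime p -> p %| n -> p %| radical n.
Proof.
move=> n_gt0 p_pr p_dvd_n.
have p_n : p \in primes n by rewrite mem_primes p_pr n_gt0.
by rewrite /radical (big_rem p p_n) /= dvdn_mulr.
Qed.

Lemma small_dvdn n g : g %| n %/ radical n -> g %| n.
Proof. by move/dvdn_trans; apply; apply: dvdn_div (radical_dvdn n). Qed.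

Section SmallGcd.

Variable n : nat.
Hypothesis n_gt0 : 0 < n.

Lemma gcd_cofactor_coprime {x} :
  gcdn x n %| n %/ radical n -> coprime (x %/ gcdn x n) n.
Proof.
set g := gcdn x n => g_small.
have g_gt0 : 0 < g by rewrite gcdn_gt0 n_gt0 orbT.
apply: contraT => not_coprime.
have gcd_gt1 : 1 < gcdn (x %/ g) n.
  by rewrite ltn_neqAle eq_sym not_coprime gcdn_gt0 n_gt0 orbT.
have [p p_pr p_dvd] := pdivP gcd_gt1.
have p_dvd_n : p %| n := dvdn_trans p_dvd (dvdn_gcdr _ _).
have pg_dvd_x : p * g %| x.
  rewrite -[x in _ %| x](divnK (dvdn_gcdl x n)) -/g dvdn_pmul2r //.
  exact: dvdn_trans p_dvd (dvdn_gcdl _ _).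
have pg_dvd_n : p * g %| n.
  rewrite (dvdn_divRL _ (radical_dvdn n)) in g_small.
  by apply: dvdn_trans g_small; rewrite mulnC dvdn_pmul2l ?prime_dvd_radical.
have : p * g %| g by rewrite dvdn_gcd pg_dvd_x.
rewrite -[X in _ %| X]mul1n dvdn_pmul2r // dvdn1 => /eqP p1.
by rewrite p1 in p_pr.
Qed.

Lemma gcdn_mul_small a b :
  gcdn a n %| n %/ radical n -> gcdn b n %| n %/ radical n ->
  gcdn (a * b) n = gcdn (gcdn a n * gcdn b n) n.
Proof.
move=> a_small b_small.
have cofactors_coprime : coprime n (a %/ gcdn a n * (b %/ gcdn b n)).
  by rewrite coprimeMr !(coprime_sym n) !gcd_cofactor_coprime.
rewrite -{1}(divnK (dvdn_gcdl a n)) -{1}(divnK (dvdn_gcdl b n)) mulnACA.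
by rewrite [in LHS]mulnC gcdnC Gauss_gcdl // gcdnC.
Qed.

Lemma small_gcdn_id x :
  x %| n * n -> gcdn x n %| n %/ radical n -> gcdn x n = x.
Proof.
move=> x_dvd gx_small.
have cof_coprime := gcd_cofactor_coprime gx_small.
have cof_dvd : x %/ gcdn x n %| n * n.
  exact: dvdn_trans (dvdn_div (dvdn_gcdl x n)) x_dvd.
have : coprime (x %/ gcdn x n) (n * n) by rewrite coprimeMr cof_coprime.
rewrite /coprime (gcdn_idPl cof_dvd) => /eqP cof1.
by rewrite -[RHS](divnK (dvdn_gcdl x n)) cof1 mul1n.
Qed.

End SmallGcd.

Lemma S_D_product_free n D :
  0 < n -> (forall d, d \in D -> d %| n %/ radical n) ->
  product_free_nat D -> product_free_mod (S_D n D).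
Proof.
move=> n_gt0 D_small D_free a b c; rewrite !inE => a_D b_D c_D c_def.
have gcd_c : gcdn c n = gcdn (gcdn a n * gcdn b n) n.
  by rewrite -c_def gcdn_modl gcdn_mul_small ?D_small.
apply: (D_free _ _ _ a_D b_D c_D); rewrite gcd_c [RHS]small_gcdn_id //.
- by apply: dvdn_mul; apply/small_dvdn/D_small.
- by rewrite -gcd_c D_small.
Qed.

Lemma totient_mul_prime m p :
  prime p -> p %| m -> totient (m * p) = totient m * p.
Proof.
move=> p_pr p_dvd_m; have [->|m_gt0] := posnP m; first by rewrite mul0n.
have [q q_coprime m_def] := pfactor_coprime p_pr m_gt0.
have e_gt0 : 0 < logn p m by rewrite logn_gt0 mem_primes p_pr m_gt0 p_dvd_m.
rewrite m_def -mulnA -expnSr !totient_coprime 1?coprime_sym ?coprimeXl //.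
by rewrite !totient_pfactor //= -!mulnA -expnSr prednK.
Qed.

Lemma totient_mul_primes_dvd m k :
  0 < k -> (forall p, prime p -> p %| k -> p %| m) ->
  totient (m * k) = totient m * k.
Proof.
elim/ltn_ind: k => k IHk k_gt0 k_primes.
have [k_le1|k_gt1] := leqP k 1.
  have -> : k = 1 by apply/eqP; rewrite eqn_leq k_le1 k_gt0.
  by rewrite !muln1.
have [p p_pr p_dvd_k] := pdivP k_gt1.
have k_def := divnK p_dvd_k; set k' := k %/ p in k_def.
have k'_gt0 : 0 < k' by move: k_gt0; rewrite -k_def muln_gt0 => /andP[].
have k'_lt : k' < k.
  by rewrite -[k'](muln1) -[in X in _ < X]k_def ltn_pmul2l ?prime_gt1.
have k'_primes r : prime r -> r %| k' -> r %| m.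
  by move=> r_pr r_dvd; apply: k_primes; rewrite // -k_def dvdn_mulr.
rewrite -k_def mulnA totient_mul_prime ?dvdn_mulr ?k_primes //.
by rewrite IHk // mulnA.
Qed.

(* Among 0 <= s < m * d, exactly totient m residues have gcd d with m * d:
   they are the s = t * d with t coprime to m. *)
Lemma count_gcdn_block m d :
  0 < d -> \sum_(0 <= s < m * d) (gcdn s (m * d) == d) = totient m.
Proof.
move=> d_gt0; rewrite totient_count_coprime big_nat_mul.
apply: eq_bigr => t _; rewrite big_ltn ?ltn_pmul2r // big_nat_cond big1.
  by rewrite /= addn0 -muln_gcdl -[X in _ == X]mul1n eqn_pmul2r // gcdnC.
move=> s /andP[/andP[lo hi] _]; case: eqP => // gcd_d.
have /dvdnP [j s_def] : d %| s by rewrite -gcd_d dvdn_gcdl.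
move: lo hi; rewrite s_def !ltn_pmul2r // => t_lt_j.
by rewrite ltnS leqNgt t_lt_j.
Qed.

Lemma count_gcdn_eq n d :
  0 < d -> d %| n -> \sum_(s < n) (gcdn s n == d) = totient (n %/ d).
Proof.
move=> d_gt0 d_dvd_n.
rewrite -(big_mkord xpredT (fun s => nat_of_bool (gcdn s n == d))).
by set m := n %/ d; rewrite -(divnK d_dvd_n) -/m count_gcdn_block.
Qed.

Lemma card_S_D n D :
  uniq D -> (forall d, d \in D -> 0 < d /\ d %| n) ->
  #|S_D n D| = \sum_(d <- D) totient (n %/ d).
Proof.
move=> D_uniq D_div; rewrite /S_D -sum1dep_card big_mkcond /=.
transitivity (\sum_(s < n) \sum_(d <- D) (gcdn s n == d : nat)).
  apply: eq_bigr => s _; rewrite -[if _ then _ else _]/(nat_of_bool _).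
  rewrite -count_uniq_mem // -sum1_count big_mkcond.
  by apply: eq_bigr => d _; rewrite /= eq_sym.
rewrite (exchange_big _ _ _ xpredT xpredT).
by apply: eq_big_seq => d /D_div [d_gt0 d_dvd_n]; apply: count_gcdn_eq.
Qed.

(* A small divisor d of n only contains primes that survive in n / d, so
   dividing n by d divides totient n by exactly d. *)
Lemma totient_div_small n d :
  0 < n -> 0 < d -> d %| n %/ radical n -> totient n = totient (n %/ d) * d.
Proof.
move=> n_gt0 d_gt0; rewrite dvdn_divRL ?radical_dvdn // => d_rad_dvd_n.
have d_dvd_n : d %| n := dvdn_trans (dvdn_mulr _ (dvdnn d)) d_rad_dvd_n.
have rad_dvd_nd : radical n %| n %/ d by rewrite dvdn_divRL // mulnC.
rewrite -totient_mul_primes_dvd ?divnK // => p p_pr p_dvd_d.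
apply: dvdn_trans rad_dvd_nd; apply: prime_dvd_radical => //.
exact: dvdn_trans d_dvd_n.
Qed.

Theorem lemma2p3 (n : nat) (D : seq nat) :
  (0 < n)%N ->
  uniq D ->
  (forall d, d \in D -> (0 < d)%N /\ (d %| (n %/ radical n))%N) ->
  product_free_nat D ->
  product_free_mod (S_D n D) /\
  (#|S_D n D|%:R : rat)%R = ((totient n)%:R * \sum_(d <- D) (d%:R)^-1)%R.
Proof.
move=> n_gt0 D_uniq D_small D_free.
split; first by apply: S_D_product_free => // d /D_small[].
rewrite card_S_D // => [|d /D_small [d_gt0 /small_dvdn]]; last by [].
rewrite natr_sum mulr_sumr; apply: eq_big_seq => d /D_small [d_gt0 d_small].
rewrite (totient_div_small _ _ n_gt0 d_gt0 d_small) natrM mulfK //.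
by rewrite pnatr_eq0 -lt0n.
Qed.
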